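(* Let $K$ be a field and let $f\colon\mathbb Z^k\to K$ be a hypergeometric term on $\mathbb Z^k$ that is weakly factorial on a polyhedral region $\mathcal R$. Then there exist finitely many polyhedral regions $\mathcal R_1,\dots,\mathcal R_m$ such that $\mathcal R=\mathcal R_1\cup\cdots\cup\mathcal R_m$ and $f$ is factorial on each $\mathcal R_i$.
   Context: A hypergeometric term on $\mathbb Z^k$ over $K$ is a function $f\colon\mathbb Z^k\to K$ such that for each $i$ there are nonzero polynomials $A_i,B_i\in K[\vec z]$ with $A_i(\vec z)f(\vec z)=B_i(\vec z)f(\vec z+\vec e_i)$ for all $\vec z\in\mathbb Z^k$. A half-space is $\{\vec z:\vec v\cdot\vec z>n\}$ ($\vec v\in\mathbb Z^k$, $n\in\mathbb Z$); a polyhedral region is $\mathbb Z^k$ or a finite intersection of half-spaces. Notation: $\mathop{\mathrm{gp}}_{j=a}^{b}g(j)=\prod_{j=a}^{b-1}g(j)$ if $b\ge a$ and $=\prod_{j=b}^{a-1}g(j)^{-1}$ if $b<a$. $f$ is weakly factorial on $\mathcal R$ if there exist a finite $V\subset\mathbb Z^k$, univariate $a_{\vec v},b_{\vec v}\in K[z]$ ($\vec v\in V$) and $\vec z_0\in\mathcal R$ such that for all $\vec z\in\mathcal R$: $f(\vec z)=\prod_{\vec v\in V}\mathop{\mathrm{gp}}_{j=\vec z_0\cdot\vec v}^{\vec z\cdot\vec v}a_{\vec v}(j)/b_{\vec v}(j)$, and all $a_{\vec v}(j),b_{\vec v}(j)$ occurring in these products are nonzero. $f$ is factorial on $\mathcal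 R$ if there exist a finite $V\subset\mathbb Z^k$ and, for $\vec v\in V$, univariate $a_{\vec v},b_{\vec v}\in K[z]$ and integers $n_{\vec v}$ such that for all $\vec z\in\mathcal R$: $f(\vec z)=\prod_{\vec v\in V}\prod_{j=1}^{\vec v\cdot\vec z+n_{\vec v}}a_{\vec v}(j)/b_{\vec v}(j)$; each $\vec v\cdot\vec z+n_{\vec v}$ is a positive integer; and $a_{\vec v}(j),b_{\vec v}(j)\ne0$ for $1\le j\le\vec v\cdot\vec z+n_{\vec v}$. *)

From HB Require Import structures.
From mathcomp Require Import all_boot all_order all_algebra.
From mathcomp Require Import mpoly.
Set Implicit Arguments. Unset Strict Implicit. Unset Printing Implicit Defensive.
Import Order.TTheory GRing.Theory Num.Theory.
Local Open Scope ring_scope.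

Definition zvec (k : nat) := {ffun 'I_k -> int}.

Definition dotz k (v z : zvec k) : int := \sum_(i < k) v i * z i.

Definition shiftz k (z : zvec k) (i : 'I_k) : zvec k :=
  [ffun j => z j + (j == i)%:Z].

Definition zeval (K : fieldType) k (p : {mpoly K[k]}) (z : zvec k) : K :=
  p.@[fun j => (z j)%:~R].

Definition hypergeometric (K : fieldType) k (f : zvec k -> K) : Prop :=
  forall i : 'I_k, exists A B : {mpoly K[k]},
    A != 0 /\ B != 0 /\
    forall z : zvec k, zeval A z * f z = zeval B z * f (shiftz z i).

Definition halfspace k (h : zvec k * int) (z : zvec k) : Prop := h.2 < dotz h.1 z.
Definition region k (H : seq (zvec k * int)) (z : zvec k) : Prop :=
  forall h, h \in H -> halfspace h z.

Definition gp (K : fieldType) (a b : int) (g : int -> K) : K :=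
  if a <= b then \prod_(i < absz (b - a)) g (a + i%:Z)
  else (\prod_(i < absz (a - b)) g (b + i%:Z))^-1.

Definition weakly_factorial_on (K : fieldType) k (f : zvec k -> K)
    (R : zvec k -> Prop) : Prop :=
  exists (V : seq (zvec k)) (a b : zvec k -> {poly K}) (z0 : zvec k),
    uniq V /\ R z0 /\
    forall z, R z ->
      f z = \prod_(v <- V)
              gp (dotz z0 v) (dotz z v) (fun j => (a v).[j%:~R] / (b v).[j%:~R])
      /\ (forall v, v \in V -> forall j : int,
            Order.min (dotz z0 v) (dotz z v) <= j < Order.max (dotz z0 v) (dotz z v) ->
            (a v).[j%:~R] != 0 /\ (b v).[j%:~R] != 0).

Definition factorial_on (K : fieldType) k (f : zvec k -> K)
    (R : zvec k -> Prop) : Prop :=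
  exists (V : seq (zvec k)) (a b : zvec k -> {poly K}) (n : zvec k -> int),
    uniq V /\
    forall z, R z ->
      f z = \prod_(v <- V) \prod_(1 <= j < (absz (dotz v z + n v)).+1)
                              ((a v).[j%:R] / (b v).[j%:R])
      /\ (forall v, v \in V -> 0 < dotz v z + n v)
      /\ (forall v, v \in V -> forall j : nat, let N := absz (dotz v z + n v) in
            (0 < j)%N -> (j <= N)%N ->
            (a v).[j%:R] != 0 /\ (b v).[j%:R] != 0).

From HB Require Import structures.
From mathcomp Require Import all_boot all_order all_algebra.
From mathcomp Require Import mpoly.
From mathcomp Require Import zify ring.
Import Order.TTheory GRing.Theory Num.Theory.
Set Implicit Arguments. Unset Strict Implicit. Unset Printing Implicit Defensive.
Local Open Scope ring_scope.

(* Fix v in V and c = v.z0.  On the three polyhedral pieces v.z > c, v.z = c and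
   v.z < c the generalized product gp_{j=c}^{v.z} a(j)/b(j) is an ordinary
   factorial product of length v.z - c, the constant 1, or a factorial product of
   length c - v.z, after shifting (resp. reflecting) a and b.  Cutting R along
   these hyperplanes for all v in V writes f, on each piece, as a product of
   factorial terms.  Terms with a common direction are merged by lowering their
   offsets to the smaller one, which only splits off constant initial segments;
   the accumulated constant becomes the term of direction 0. *)

Section Regions.
Variable k : nat.
Implicit Types (v z : zvec k) (c : int) (H : seq (zvec k * int)).

Lemma dotzC v z : dotz v z = dotz z v.
Proof. by apply: eq_bigr => i _; rewrite mulrC. Qed.

Lemma dot0z z : dotz 0 z = 0.
Proof. by rewrite /dotz big1 // => i _; rewrite ffunE mul0r. Qed.

Lemma dotNz v z : dotz (- v) z = - dotz v z.
Proof. by rewrite /dotz -sumrN; apply: eq_bigr => i _; rewrite ffunE mulNr. Qed.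

Lemma region_cat H1 H2 z : region (H1 ++ H2) z <-> region H1 z /\ region H2 z.
Proof.
split; first by move=> h; split=> x hx; apply: h; rewrite mem_cat hx ?orbT.
by case=> h1 h2 x; rewrite mem_cat => /orP[/h1|/h2].
Qed.

Definition trichotomy v c : seq (seq (zvec k * int)) :=
  [:: [:: (v, c)]; [:: (v, c - 1); (- v, - c - 1)]; [:: (- v, - c)]].

Lemma trichotomy_cover v c z : exists2 C, C \in trichotomy v c & region C z.
Proof.
have [lt|[eq|gt]] : c < dotz v z \/ dotz v z = c \/ dotz v z < c by lia.
- exists [:: (v, c)]; first by rewrite !inE eqxx.
  by move=> x; rewrite inE => /eqP->.
- exists [:: (v, c - 1); (- v, - c - 1)]; first by rewrite !inE eqxx ?orbT.
  by move=> x; rewrite !inE => /orP[]/eqP->; rewrite /halfspace /= ?dotNz; lia.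
- exists [:: (- v, - c)]; first by rewrite !inE eqxx ?orbT.
  by move=> x; rewrite inE => /eqP->; rewrite /halfspace /= dotNz; lia.
Qed.

Lemma region_trichotomy v c z :
  [/\ region [:: (v, c)] z -> c < dotz v z,
      region [:: (v, c - 1); (- v, - c - 1)] z -> dotz v z = c &
      region [:: (- v, - c)] z -> dotz v z < c].
Proof.
split=> hR.
- by apply: (hR (v, c)); rewrite inE.
- have := hR (v, c - 1); have := hR (- v, - c - 1).
  by rewrite !inE !eqxx orbT /halfspace /= dotNz => /(_ isT) ? /(_ isT) ?; lia.
- by have := hR (- v, - c); rewrite inE eqxx /halfspace /= dotNz => /(_ isT); lia.
Qed.

End Regions.

Section FactorialProducts.
Variable K : fieldType.
Implicit Types (a b p : {poly K}) (x : K) (N d : nat) (c n : int).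

Definition nfact a b N : K := \prod_(1 <= j < N.+1) (a.[j%:R] / b.[j%:R]).

Definition nfact_defined a b N :=
  forall j : nat, (0 < j)%N -> (j <= N)%N -> a.[j%:R] != 0 /\ b.[j%:R] != 0.

Definition shiftp p x := p \Po ('X + x%:P).
Definition reflectp p x := p \Po (x%:P - 'X).

Lemma shiftpE p x y : (shiftp p x).[y] = p.[y + x].
Proof. by rewrite horner_comp !hornerE. Qed.

Lemma reflectpE p x y : (reflectp p x).[y] = p.[x - y].
Proof. by rewrite horner_comp !hornerE. Qed.

Lemma nfact_neq0 a b N : nfact_defined a b N -> nfact a b N != 0.
Proof.
move=> hab; rewrite prodf_seq_neq0; apply/allP => j.
rewrite mem_index_iota => /andP[j_gt0 j_le]; have [ha hb] := hab j j_gt0 j_le.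
by rewrite /= mulf_neq0 ?invr_eq0.
Qed.

Lemma nfactM a1 b1 a2 b2 N :
  nfact (a1 * a2) (b1 * b2) N = nfact a1 b1 N * nfact a2 b2 N.
Proof.
by rewrite /nfact -big_split; apply: eq_bigr => j _ /=; rewrite !hornerM mulf_div.
Qed.

Lemma nfact_definedM a1 b1 a2 b2 N :
  nfact_defined a1 b1 N -> nfact_defined a2 b2 N ->
  nfact_defined (a1 * a2) (b1 * b2) N.
Proof.
move=> h1 h2 j j_gt0 j_le; have [? ?] := h1 j j_gt0 j_le.
by have [? ?] := h2 j j_gt0 j_le; rewrite !hornerM !mulf_neq0.
Qed.

Lemma nfactD a b N d :
  nfact a b (N + d) = nfact a b d * nfact (shiftp a d%:R) (shiftp b d%:R) N.
Proof.
rewrite /nfact (@big_cat_nat _ _ _ d.+1) //=; last by rewrite ltnS leq_addl.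
congr (_ * _); rewrite -[d.+1]add1n big_addn -addSn addnK.
by apply: eq_bigr => j _; rewrite !shiftpE natrD.
Qed.

Lemma nfact_definedD a b N d :
  nfact_defined a b (N + d) -> nfact_defined (shiftp a d%:R) (shiftp b d%:R) N.
Proof.
move=> hab j j_gt0 j_le; rewrite !shiftpE -natrD.
by apply: hab; rewrite ?addn_gt0 ?j_gt0 ?leq_add2r.
Qed.

Lemma gp_lt a b c n : c < n ->
  gp c n (fun j => a.[j%:~R] / b.[j%:~R]) =
  nfact (shiftp a (c - 1)%:~R) (shiftp b (c - 1)%:~R) (absz (n - c)).
Proof.
move=> lt_cn; rewrite /gp (ltW lt_cn) /nfact big_add1 /= big_mkord.
apply: eq_bigr => i _; rewrite !shiftpE.
by have -> : (c + i%:Z)%:~R = i.+1%:R + (c - 1)%:~R :> K by ring.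
Qed.

Lemma gp_gt a b c n : n < c ->
  gp c n (fun j => a.[j%:~R] / b.[j%:~R]) =
  nfact (reflectp b c%:~R) (reflectp a c%:~R) (absz (c - n)).
Proof.
move=> lt_nc; rewrite /gp lt_geF // -prodfV /nfact big_add1 big_nat_rev /= big_mkord.
apply: eq_bigr => i _; rewrite invf_div !reflectpE.
set m := (0 + _ - _).+1; have em : m%:Z = c - n - i%:Z by have := ltn_ord i; lia.
by rewrite -[m%:R]/(m%:Z%:~R) em; congr (_.[_] / _.[_]); ring.
Qed.

Lemma nfact_defined_lt a b c n : c < n ->
  (forall j, c <= j < n -> a.[j%:~R] != 0 /\ b.[j%:~R] != 0) ->
  nfact_defined (shiftp a (c - 1)%:~R) (shiftp b (c - 1)%:~R) (absz (n - c)).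
Proof.
move=> lt_cn hab j j_gt0 j_le; rewrite !shiftpE.
have -> : j%:R + (c - 1)%:~R = (c - 1 + j%:Z)%:~R :> K by ring.
by apply: hab; lia.
Qed.

Lemma nfact_defined_gt a b c n : n < c ->
  (forall j, n <= j < c -> a.[j%:~R] != 0 /\ b.[j%:~R] != 0) ->
  nfact_defined (reflectp b c%:~R) (reflectp a c%:~R) (absz (c - n)).
Proof.
move=> lt_nc hab j j_gt0 j_le; rewrite !reflectpE.
have -> : c%:~R - j%:R = (c - j%:Z)%:~R :> K by ring.
by apply/and_comm/hab; lia.
Qed.

End FactorialProducts.

Section FactorialTerms.
Variables (K : fieldType) (k : nat).
Implicit Types (z : zvec k) (R : zvec k -> Prop) (d : nat).

Record fterm := FTerm { fdir : zvec k; fnum : {poly K}; fden : {poly K}; foff : int }.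

Definition fterm_tuple (t : fterm) := (fdir t, fnum t, fden t, foff t).
Definition tuple_fterm (x : zvec k * {poly K} * {poly K} * int) :=
  FTerm x.1.1.1 x.1.1.2 x.1.2 x.2.
Lemma fterm_tupleK : cancel fterm_tuple tuple_fterm. Proof. by case. Qed.
HB.instance Definition _ := Equality.copy fterm (can_type fterm_tupleK).

Implicit Types (t : fterm) (L : seq fterm).

Definition flen t z : nat := absz (dotz (fdir t) z + foff t).

Definition fvalue t z : K := nfact (fnum t) (fden t) (flen t z).

Definition fvalid t z :=
  0 < dotz (fdir t) z + foff t /\ nfact_defined (fnum t) (fden t) (flen t z).

Lemma fvalue_neq0 t z : fvalid t z -> fvalue t z != 0.
Proof. by case=> _; apply: nfact_neq0. Qed.

Lemma fvalue_dir0 t z : fdir t = 0 -> fvalue t z = fvalue t 0.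
Proof. by move=> t0; rewrite /fvalue /flen t0 !dot0z. Qed.

Lemma gp_trichotomy (a b : {poly K}) v c C : C \in trichotomy v c ->
  exists t, forall z, region C z ->
    (forall j, Order.min c (dotz v z) <= j < Order.max c (dotz v z) ->
       a.[j%:~R] != 0 /\ b.[j%:~R] != 0) ->
    gp c (dotz v z) (fun j => a.[j%:~R] / b.[j%:~R]) = fvalue t z /\ fvalid t z.
Proof.
rewrite !inE => /or3P[]/eqP->.
- exists (FTerm v (shiftp a (c - 1)%:~R) (shiftp b (c - 1)%:~R) (- c)) => z.
  have [lt_c _ _] := region_trichotomy v c z.
  move=> /lt_c lt_cz; rewrite min_l ?max_r ?ltW // => hab.
  rewrite gp_lt //; split=> //; split; first by rewrite /= subr_gt0.
  exact: nfact_defined_lt.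
- exists (FTerm 0 1 1 1) => z; have [_ eq_c _] := region_trichotomy v c z.
  move=> /eq_c -> _; rewrite /gp lexx subrr big_ord0 /fvalue /fvalid /flen /= dot0z.
  rewrite add0r /nfact big_nat1 hornerC divr1.
  by split=> //; split=> // j _ _; rewrite hornerC oner_neq0.
- exists (FTerm (- v) (reflectp b c%:~R) (reflectp a c%:~R) c) => z.
  have [_ _ gt_c] := region_trichotomy v c z.
  move=> /gt_c lt_zc; rewrite min_r ?max_l ?ltW // => hab.
  rewrite gp_gt // /fvalue /fvalid /flen /= dotNz (addrC (- _)); split=> //.
  by split; [rewrite subr_gt0 | exact: nfact_defined_gt].
Qed.

Lemma gp_prod_pieces (V : seq (zvec k)) (a b : zvec k -> {poly K}) z0 :
  exists Ps : seq (seq (zvec k * int)),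
    (forall z, exists2 P, P \in Ps & region P z) /\
    (forall P, P \in Ps -> exists L, forall z, region P z ->
      (forall v, v \in V -> forall j : int,
         Order.min (dotz z0 v) (dotz z v) <= j < Order.max (dotz z0 v) (dotz z v) ->
         (a v).[j%:~R] != 0 /\ (b v).[j%:~R] != 0) ->
      \prod_(v <- V) gp (dotz z0 v) (dotz z v) (fun j => (a v).[j%:~R] / (b v).[j%:~R])
        = \prod_(t <- L) fvalue t z /\ {in L, forall t, fvalid t z}).
Proof.
elim: V => [|v V [Ps [cover hPs]]].
  exists [:: [::]]; split; first by move=> z; exists [::]; rewrite ?inE.
  by move=> P; rewrite inE => /eqP-> {P}; exists [::] => z _ _; rewrite !big_nil.
exists [seq C ++ P | C <- trichotomy v (dotz z0 v), P <- Ps]; split.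
  move=> z; have [C hC rC] := trichotomy_cover v (dotz z0 v) z.
  have [P hP rP] := cover z.
  by exists (C ++ P); [apply: allpairs_f | apply/region_cat].
move=> _ /allpairsP[[C P] [/= hC hP ->]].
have [t ht] := gp_trichotomy (a v) (b v) hC; have [L hL] := hPs P hP.
exists (t :: L) => z /region_cat[rC rP] hab.
have hab_v := hab v (mem_head _ _); rewrite (dotzC z v) in hab_v.
have [e1 vt] := ht z rC hab_v.
have [e2 vL] := hL z rP (fun w wV => hab w (mem_behead (s := v :: V) wV)).
split; first by rewrite !big_cons (dotzC z v) e1 e2.
by move=> u; rewrite inE => /predU1P[->|/vL].
Qed.

Definition fshift t d :=
  FTerm (fdir t) (shiftp (fnum t) d%:R) (shiftp (fden t) d%:R) (foff t - d%:Z).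

Lemma fshiftP t d z : d%:Z < dotz (fdir t) z + foff t -> fvalid t z ->
  fvalue t z = nfact (fnum t) (fden t) d * fvalue (fshift t d) z /\
  fvalid (fshift t d) z.
Proof.
move=> lt_d [_ def_t].
have e : flen t z = (flen (fshift t d) z + d)%N by rewrite /flen /=; lia.
rewrite /fvalue /fvalid e nfactD in def_t *; split => //; split.
  by rewrite /=; lia.
exact: nfact_definedD.
Qed.

Definition fmul t1 t2 :=
  FTerm (fdir t1) (fnum t1 * fnum t2) (fden t1 * fden t2) (foff t1).

Lemma fmulP t1 t2 z : fvalid t1 z -> fvalid t2 z ->
  fdir t1 = fdir t2 -> foff t1 = foff t2 ->
  fvalue (fmul t1 t2) z = fvalue t1 z * fvalue t2 z /\ fvalid (fmul t1 t2) z.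
Proof.
move=> [pos1 def1] [_ def2] e_dir e_off.
have e : flen t2 z = flen t1 z by rewrite /flen e_dir e_off.
rewrite /fvalue /fvalid e in def2 *; rewrite nfactM.
by split=> //; split=> //; apply: nfact_definedM.
Qed.

Definition fexcess t1 t2 : nat := absz (foff t1 - Order.min (foff t1) (foff t2)).

Definition fmerge t1 t2 :=
  fmul (fshift t1 (fexcess t1 t2)) (fshift t2 (fexcess t2 t1)).

Definition fmerge_const t1 t2 :=
  nfact (fnum t1) (fden t1) (fexcess t1 t2) * nfact (fnum t2) (fden t2) (fexcess t2 t1).

Lemma fmergeP t1 t2 z : fdir t1 = fdir t2 -> fvalid t1 z -> fvalid t2 z ->
  fvalue t1 z * fvalue t2 z = fmerge_const t1 t2 * fvalue (fmerge t1 t2) z /\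
  fvalid (fmerge t1 t2) z.
Proof.
move=> e_dir v1 v2; have [pos1 _] := v1; have [pos2 _] := v2.
rewrite e_dir in pos1.
have lt1 : (fexcess t1 t2)%:Z < dotz (fdir t1) z + foff t1.
  by rewrite e_dir /fexcess minEle; case: ifP => ?; lia.
have lt2 : (fexcess t2 t1)%:Z < dotz (fdir t2) z + foff t2.
  by rewrite /fexcess minEle; case: ifP => ?; lia.
have e_off : foff (fshift t1 (fexcess t1 t2)) = foff (fshift t2 (fexcess t2 t1)).
  by rewrite /= /fexcess !minEle; do 2!case: ifP => ?; lia.
have [e1 w1] := fshiftP lt1 v1; have [e2 w2] := fshiftP lt2 v2.
have [e w] := fmulP w1 w2 e_dir e_off.
by rewrite e1 e2 /fmerge /fmerge_const e mulrACA.
Qed.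

Definition fnormal R L V (F : zvec k -> fterm) (c : K) :=
  [/\ uniq V, 0 \notin V, {in V, forall v, fdir (F v) = v} &
      forall z, R z ->
        \prod_(t <- L) fvalue t z = c * \prod_(v <- V) fvalue (F v) z /\
        {in V, forall v, fvalid (F v) z}].

Lemma fnormal_nil R : fnormal R [::] [::] (fun v => FTerm v 1 1 0) 1.
Proof. by split=> // z _; rewrite !big_nil mulr1. Qed.

Lemma fnormal_cons_dir0 R L V F c t : fdir t = 0 -> fnormal R L V F c ->
  fnormal R (t :: L) V F (fvalue t 0 * c).
Proof.
move=> t0 [uV V0 dirF hF]; split=> // z Rz; have [e vF] := hF z Rz.
by rewrite big_cons e (fvalue_dir0 z t0) mulrA.
Qed.

Lemma fnormal_cons_new R L V F c t : fdir t != 0 -> fdir t \notin V ->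
  (forall z, R z -> fvalid t z) -> fnormal R L V F c ->
  fnormal R (t :: L) (fdir t :: V) (fwith (fdir t) t F) c.
Proof.
move=> t0 tV vt [uV V0 dirF hF]; split.
- by rewrite /= tV.
- by rewrite inE negb_or eq_sym t0.
- by move=> v; rewrite inE /=; case: eqP => [->|_ /= /dirF].
move=> z Rz; have [e vF] := hF z Rz; split.
  rewrite !big_cons /= eqxx e mulrCA; congr (_ * (_ * _)).
  by apply: eq_big_seq => v vV; rewrite ifN //; apply: contraNneq tV => <-.
by move=> v; rewrite inE /=; case: eqP => [-> _|_ /= /vF //]; exact: vt.
Qed.

Lemma fnormal_cons_merge R L V F c t : fdir t \in V ->
  (forall z, R z -> fvalid t z) -> fnormal R L V F c ->
  fnormal R (t :: L) V (fwith (fdir t) (fmerge t (F (fdir t))) F)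
    (fmerge_const t (F (fdir t)) * c).
Proof.
move=> tV vt [uV V0 dirF hF]; set w := fdir t in tV *.
have dir_tw : fdir t = fdir (F w) by rewrite dirF.
split=> //; first by move=> v vV /=; case: eqP => [vw|_]; [rewrite vw | exact: dirF].
move=> z Rz; have [e vF] := hF z Rz.
have [em vm] := fmergeP dir_tw (vt z Rz) (vF w tV).
split; last by move=> v vV /=; case: eqP => _; [exact: vm | exact: vF].
rewrite big_cons e !(bigD1_seq w) //= eqxx mulrCA [fvalue t z * _]mulrA em.
under [in RHS]eq_bigr => v /negbTE -> do [].
by ring.
Qed.

Lemma fnormal_exists R L : (forall z, R z -> {in L, forall t, fvalid t z}) ->
  exists V F c, fnormal R L V F c.
Proof.
elim: L => [|t L IH] vL.
  by exists [::], (fun v => FTerm v 1 1 0), 1; apply: fnormal_nil.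
have vt z : R z -> fvalid t z by move=> Rz; apply: vL Rz _ (mem_head _ _).
have [|V [F [c nf]]] := IH.
  by move=> z Rz u uL; apply: vL; rewrite // inE uL orbT.
have [t0|t_ne0] := eqVneq (fdir t) 0.
  by exists V, F, (fvalue t 0 * c); apply: fnormal_cons_dir0.
have [tV|tV] := boolP (fdir t \in V).
  by do 3!eexists; apply: fnormal_cons_merge tV vt nf.
by do 3!eexists; apply: fnormal_cons_new t_ne0 tV vt nf.
Qed.

Lemma factorial_on_fnormal (f : zvec k -> K) R L V F c : fnormal R L V F c ->
  (forall z, R z -> f z = \prod_(t <- L) fvalue t z /\ {in L, forall t, fvalid t z}) ->
  factorial_on f R.
Proof.
move=> [uV V0 dirF hF] hf.
exists (0 :: V), (fun v => if v == 0 then c%:P else fnum (F v)),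
  (fun v => if v == 0 then 1 else fden (F v)),
  (fun v => if v == 0 then 1 else foff (F v)).
split; first by rewrite /= V0.
have V_neq0 v : v \in V -> (v == 0) = false.
  by move=> vV; apply: contraNF V0 => /eqP <-.
move=> z Rz; have [ef vL] := hf z Rz; have [e vF] := hF z Rz.
have c_neq0 : c != 0.
  have : \prod_(t <- L) fvalue t z != 0.
    by rewrite prodf_seq_neq0; apply/allP => t tL; apply: fvalue_neq0 (vL t tL).
  by rewrite e mulf_eq0 negb_or => /andP[].
split.
  rewrite ef e big_cons eqxx dot0z add0r big_nat1 !hornerC divr1; congr (_ * _).
  by apply: eq_big_seq => v vV; rewrite V_neq0 // /fvalue /flen dirF.
split=> v; rewrite inE => /predU1P[->|vV]; rewrite ?eqxx ?dot0z ?(V_neq0 v vV) //.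
- by have [] := vF v vV; rewrite dirF.
- by move=> j N _ _; rewrite !hornerC c_neq0 oner_neq0.
- by have [_] := vF v vV; rewrite /flen dirF.
Qed.

End FactorialTerms.

Unset Implicit Arguments.

Theorem lemmaB25 (K : fieldType) (k : nat) (f : zvec k -> K)
    (H : seq (zvec k * int)) :
  hypergeometric f ->
  weakly_factorial_on f (region H) ->
  exists Hs : seq (seq (zvec k * int)),
    (forall z, region H z <-> exists2 Hi, Hi \in Hs & region Hi z) /\
    (forall Hi, Hi \in Hs -> factorial_on f (region Hi)).
Proof.
move=> _ [V [a [b [z0 [_ [_ hf]]]]]].
have [Ps [cover hPs]] := gp_prod_pieces V a b z0.
exists [seq H ++ P | P <- Ps]; split.
  move=> z; split; last by case=> _ /mapP[P _ ->] /region_cat[].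
  move=> rH; have [P hP rP] := cover z.
  by exists (H ++ P); [apply: map_f | apply/region_cat].
move=> _ /mapP[P hP ->]; have [L hL] := hPs P hP.
have fL z : region (H ++ P) z ->
    f z = \prod_(t <- L) fvalue t z /\ {in L, forall t, fvalid t z}.
  move=> /region_cat[rH rP]; have [ef hab] := hf z rH; have [e vL] := hL z rP hab.
  by rewrite ef e.
have [V' [F [c nf]]] := fnormal_exists (fun z Rz => (fL z Rz).2).
exact: factorial_on_fnormal nf fL.
Qed.
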